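(* Let $\lambda,\mu,\nu$ be partitions of the same integer with $\ell(\lambda)\le 9$, $\ell(\mu),\ell(\nu)\le 3$. Set $a=\lambda_{\ge4}$, $b=\lambda_{\ge2}+\lambda_{\ge7}$, $c=\lambda_{\ge3}+\lambda_{\ge8}$, $d=\lambda_2+2\lambda_3+2\lambda_4+3\lambda_5+3\lambda_6+4\lambda_7+4\lambda_8+5\lambda_9$. Then the atomic Kronecker coefficient $\tilde g_{\mu,\nu,\lambda}$ is nonzero if and only if all of the following hold: $$\nu_2+\nu_3-a\ge0,\quad \mu_2+\mu_3+\nu_2+\nu_3-b\ge0,\quad \mu_3+\nu_2+\nu_3-c\ge0,\quad \mu_2+2\mu_3+2\nu_2+3\nu_3-d\ge0.$$
   Context: Partitions are padded with zero parts and $\lambda_{\ge i}=\lambda_i+\lambda_{i+1}+\cdots$. Let $X=\{1,x_1,x_2\}$, $Y=\{1,y_1,y_2\}$, $XY=\{ab:a\in X,b\in Y\}$ ordered by $1\succ x_1\succ x_2\succ y_1\succ y_2\succ x_1y_1\succ x_1y_2\succ x_2y_1\succ x_2y_2$. Let $\mathcal P_{3,3}$ be the set of unordered pairs $\{u,v\}$ of distinct elements of $XY$, not both of the form $a\cdot1$ and not both of the form $1\cdot b$, written with $u\succ v$. Substituting $x_1=s_1t_1$, $x_2=s_1s_2t_1^2$, $y_1=s_0s_1s_2t_1^2$, $y_2=s_0s_1s_2t_1^3$, each $v/u$ becomes a monomial in $s_0,s_1,s_2,t_1$ with nonnegative exponents, and $F_{3,3}(s_0,s_1,s_2,t_1)=\prod_{\{u\succ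 v\}\in\mathcal P_{3,3}}(1-v/u)^{-1}$ (a product of 30 factors) is expanded as a power series. The atomic Kronecker coefficient is $\tilde g_{\mu,\nu,\lambda}:=$ the coefficient of $s_0^{\nu_2+\nu_3-a}\,s_1^{\mu_2+\mu_3+\nu_2+\nu_3-b}\,s_2^{\mu_3+\nu_2+\nu_3-c}\,t_1^{\mu_2+2\mu_3+2\nu_2+3\nu_3-d}$ in $F_{3,3}$ (taken to be $0$ if some exponent is negative). *)

From mathcomp Require Import all_boot all_order all_algebra.
Set Implicit Arguments. Unset Strict Implicit. Unset Printing Implicit Defensive.
Import GRing.Theory Num.Theory.

(** Partitions: finite non-increasing sequences of positive integers;
    parts are padded with zeros: [part l i] is lambda_i (1-indexed). *)
Definition is_partition (l : seq nat) : bool :=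
  sorted geq l && all (fun x => 0 < x) l.
Definition part (l : seq nat) (i : nat) : nat := nth 0 l i.-1.
Definition part_ge (l : seq nat) (i : nat) : nat := sumn (drop i.-1 l).

(** Exponent vectors of monomials in (s0, s1, s2, t1). *)
Definition vec4 := (nat * nat * nat * nat)%type.
Definition vadd (u v : vec4) : vec4 :=
  let: (a1, b1, c1, d1) := u in let: (a2, b2, c2, d2) := v in
  (a1 + a2, b1 + b2, c1 + c2, d1 + d2).
Definition vsub (u v : vec4) : vec4 :=
  let: (a1, b1, c1, d1) := u in let: (a2, b2, c2, d2) := v in
  (a1 - a2, b1 - b2, c1 - c2, d1 - d2).
Definition vscale (k : nat) (u : vec4) : vec4 :=
  let: (a, b, c, d) := u in (k * a, k * b, k * c, k * d).
Definition vle (u v : vec4) : bool :=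
  let: (a1, b1, c1, d1) := u in let: (a2, b2, c2, d2) := v in
  [&& a1 <= a2, b1 <= b2, c1 <= c2 & d1 <= d2].
Definition vtot (u : vec4) : nat := let: (a, b, c, d) := u in a + b + c + d.

(** X = {1, x1, x2} indexed by 0,1,2 ; Y = {1, y1, y2} indexed by 0,1,2.
    Substitution x1 = s1 t1, x2 = s1 s2 t1^2, y1 = s0 s1 s2 t1^2,
    y2 = s0 s1 s2 t1^3. *)
Definition xexp (i : nat) : vec4 :=
  match i with 0 => (0, 0, 0, 0) | 1 => (0, 1, 0, 1) | _ => (0, 1, 1, 2) end.
Definition yexp (j : nat) : vec4 :=
  match j with 0 => (0, 0, 0, 0) | 1 => (1, 1, 1, 2) | _ => (1, 1, 1, 3) end.
Definition xyexp (p : nat * nat) : vec4 := vadd (xexp p.1) (yexp p.2).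

(** XY listed in decreasing order for the total order "succ":
    1, x1, x2, y1, y2, x1y1, x1y2, x2y1, x2y2. *)
Definition XY_ordered : seq (nat * nat) :=
  [:: (0, 0); (1, 0); (2, 0); (0, 1); (0, 2); (1, 1); (1, 2); (2, 1); (2, 2)].

(** P_{3,3}: pairs u succ v of distinct elements, not both of the form a*1
    and not both of the form 1*b. *)
Definition XYat (p : nat) : nat * nat := nth (0, 0) XY_ordered p.
Definition P33_ok (p q : nat) : bool :=
  [&& p < q,
      ~~ (((XYat p).2 == 0) && ((XYat q).2 == 0))
    & ~~ (((XYat p).1 == 0) && ((XYat q).1 == 0))].
Definition P33 : seq ((nat * nat) * (nat * nat)) :=
  flatten [seq [seq (XYat p, XYat q) | q <- iota 0 9 & P33_ok p q] | p <- iota 0 9].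

(** Exponent vector of the monomial v/u, for each pair {u succ v}. *)
Definition F33_factors : seq vec4 :=
  [seq vsub (xyexp uv.2) (xyexp uv.1) | uv <- P33].

(** Coefficient of the monomial with exponent vector [w] in the power series
    prod_{e in es} (1 - m_e)^{-1} = prod_{e in es} sum_{k>=0} m_e^k.
    (Each factor has a nonzero exponent vector, so k is bounded by the total
    degree of w.) *)
Fixpoint geom_prod_coef (es : seq vec4) (w : vec4) : nat :=
  match es with
  | [::] => (w == (0, 0, 0, 0))
  | e :: es' =>
      \sum_(k < (vtot w).+1)
        (if vle (vscale k e) w then geom_prod_coef es' (vsub w (vscale k e)) else 0)
  end.

Definition F33_coef (A B C D : int) : nat :=
  if [&& (0 <= A)%R, (0 <= B)%R, (0 <= C)%R & (0 <= D)%R]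
  then geom_prod_coef F33_factors (absz A, absz B, absz C, absz D)
  else 0.

Definition la_a (l : seq nat) : nat := part_ge l 4.
Definition la_b (l : seq nat) : nat := part_ge l 2 + part_ge l 7.
Definition la_c (l : seq nat) : nat := part_ge l 3 + part_ge l 8.
Definition la_d (l : seq nat) : nat :=
  part l 2 + 2 * part l 3 + 2 * part l 4 + 3 * part l 5 + 3 * part l 6
  + 4 * part l 7 + 4 * part l 8 + 5 * part l 9.

Definition atomic_kron (mu nu la : seq nat) : nat :=
  F33_coef
    ((part nu 2 + part nu 3)%:Z - (la_a la)%:Z)
    ((part mu 2 + part mu 3 + part nu 2 + part nu 3)%:Z - (la_b la)%:Z)
    ((part mu 3 + part nu 2 + part nu 3)%:Z - (la_c la)%:Z)
    ((part mu 2 + 2 * part mu 3 + 2 * part nu 2 + 3 * part nu 3)%:Z - (la_d la)%:Z).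

From mathcomp Require Import all_boot all_order all_algebra.
From mathcomp Require Import zify.
Import GRing.Theory Num.Theory.

(* Among the factors of F_{3,3} are (1 - s0)^-1, (1 - s1)^-1, (1 - s2)^-1 and
   (1 - t1)^-1, coming from the pairs {x2 > y1}, {y2 > x1y1}, {x1y2 > x2y1} and
   {x2y1 > x2y2}.  Since every factor
   has nonnegative coefficients, the coefficient of a monomial in F_{3,3} is at
   least its coefficient in the product of these four geometric series, namely 1.
   Hence the coefficient is nonzero exactly when all its exponents are
   nonnegative. *)

Lemma geom_prod_coef_cons_ge e es w k :
  k <= vtot w -> vle (vscale k e) w ->
  geom_prod_coef es (vsub w (vscale k e)) <= geom_prod_coef (e :: es) w.
Proof.
move=> le_k_w le_ke_w /=.
have lt_k_w : k < (vtot w).+1 by [].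
by rewrite (bigD1 (Ordinal lt_k_w)) //= le_ke_w leq_addr.
Qed.

Lemma geom_prod_coef_cons_skip e es w :
  geom_prod_coef es w <= geom_prod_coef (e :: es) w.
Proof.
have := @geom_prod_coef_cons_ge e es w 0 (leq0n _).
by case: w e => [[[a b] c] d] [[[? ?] ?] ?]; rewrite /= !mul0n !subn0; apply.
Qed.

Lemma geom_prod_coef_subseq es' es w :
  subseq es' es -> geom_prod_coef es' w <= geom_prod_coef es w.
Proof.
elim: es es' w => [|e es IHes] es' w; first by rewrite subseq0 => /eqP->.
case: es' => [|e' es'] sub_es.
  exact: leq_trans (IHes _ _ (sub0seq es)) (geom_prod_coef_cons_skip _ _ _).
move: sub_es => /=; case: eqP => [-> sub_es | _ sub_es].
  by apply: leq_sum => k _; case: ifP => // _; apply: IHes.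
exact: leq_trans (IHes _ _ sub_es) (geom_prod_coef_cons_skip _ _ _).
Qed.

Lemma geom_prod_coef_cons_gt0 e es w k w' :
  k <= vtot w -> vle (vscale k e) w -> vsub w (vscale k e) = w' ->
  0 < geom_prod_coef es w' -> 0 < geom_prod_coef (e :: es) w.
Proof.
by move=> le_k_w le_ke_w <- /leq_trans; apply; apply: geom_prod_coef_cons_ge.
Qed.

Definition coordinate_vecs : seq vec4 :=
  [:: (1, 0, 0, 0); (0, 1, 0, 0); (0, 0, 1, 0); (0, 0, 0, 1)].

Lemma geom_prod_coef_coordinate_vecs_gt0 a b c d :
  0 < geom_prod_coef coordinate_vecs (a, b, c, d).
Proof.
apply: (@geom_prod_coef_cons_gt0 _ _ _ a (0, b, c, d));
  last apply: (@geom_prod_coef_cons_gt0 _ _ _ b (0, 0, c, d));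
  last apply: (@geom_prod_coef_cons_gt0 _ _ _ c (0, 0, 0, d));
  last apply: (@geom_prod_coef_cons_gt0 _ _ _ d (0, 0, 0, 0)).
all: rewrite /= ?muln1 ?muln0 ?subnn ?subn0 ?leqnn ?leq0n //; lia.
Qed.

Lemma coordinate_vecs_subseq_F33_factors : subseq coordinate_vecs F33_factors.
Proof. by vm_compute. Qed.

Lemma F33_coef_neq0 A B C D :
  F33_coef A B C D != 0 <-> [/\ (0 <= A)%R, (0 <= B)%R, (0 <= C)%R & (0 <= D)%R].
Proof.
rewrite /F33_coef; case: ifP => [exps_ge0 | exps_ge0_false]; split=> //.
- by move=> _; apply/and4P.
- move=> _; rewrite -lt0n.
  apply: leq_trans _ (@geom_prod_coef_subseq _ _ _ coordinate_vecs_subseq_F33_factors).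
  exact: geom_prod_coef_coordinate_vecs_gt0.
- case=> A_ge0 B_ge0 C_ge0 D_ge0.
  by rewrite A_ge0 B_ge0 C_ge0 D_ge0 in exps_ge0_false.
Qed.

Theorem proposition4p4 (la mu nu : seq nat) :
  is_partition la -> is_partition mu -> is_partition nu ->
  sumn la = sumn mu -> sumn mu = sumn nu ->
  size la <= 9 -> size mu <= 3 -> size nu <= 3 ->
  (atomic_kron mu nu la != 0 <->
   [/\ (0 <= (part nu 2 + part nu 3)%:Z - (la_a la)%:Z)%R,
       (0 <= (part mu 2 + part mu 3 + part nu 2 + part nu 3)%:Z - (la_b la)%:Z)%R,
       (0 <= (part mu 3 + part nu 2 + part nu 3)%:Z - (la_c la)%:Z)%R &
       (0 <= (part mu 2 + 2 * part mu 3 + 2 * part nu 2 + 3 * part nu 3)%:Z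
             - (la_d la)%:Z)%R]).
Proof. by move=> *; apply: F33_coef_neq0. Qed.
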